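(* Let $N\ge1$, $V=\{1,\dots,N\}$, $A$ an $N\times N$ row-stochastic matrix, and $\sigma_1,\sigma_2,\dots$ random variables with values in $2^V$. Consider $x(k+1)=A_{\sigma_k}x(k)$, $k\ge1$, with deterministic $x(1)\in\mathbb R^N$. Then the iteration reaches consensus almost surely if and only if $\lim_{k\to\infty}\mathbb P\big(\lambda(A_{\sigma_k}A_{\sigma_{k-1}}\cdots A_{\sigma_1})\ge\varepsilon\big)=0$ for every $\varepsilon>0$.
   Context: For $\sigma\subseteq V$, $A_\sigma$ is the matrix whose $j$-th row equals the $j$-th row of $A$ if $j\in\sigma$ and equals $e_j^T$ otherwise. For a row-stochastic matrix $B=(b_{ij})$, the ergodic coefficient is $\lambda(B)=1-\min_{i\neq j}\sum_{k=1}^N\min(b_{ik},b_{jk})$. The iteration reaches consensus almost surely if for every $\varepsilon>0$ and every $x(1)\in\mathbb R^N$, $\lim_{k\to\infty}\mathbb P\big(\sum_{j=1}^N (x_j(k)-\frac1N\sum_{i=1}^N x_i(k))^2\ge\varepsilon\big)=0$. *)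

From HB Require Import structures.
From mathcomp Require Import all_boot all_order all_algebra.
From mathcomp Require Import all_classical all_reals all_analysis.
Set Implicit Arguments. Unset Strict Implicit. Unset Printing Implicit Defensive.
Import Order.TTheory GRing.Theory Num.Theory.
Local Open Scope classical_set_scope.
Local Open Scope ring_scope.

Definition row_stochastic (R : realType) (N : nat) (A : 'M[R]_N) : Prop :=
  (forall i j, 0 <= A i j) /\ (forall i, \sum_(j < N) A i j = 1).

Definition A_sub (R : realType) (N : nat) (A : 'M[R]_N) (s : {set 'I_N}) : 'M[R]_N :=
  \matrix_(i, j) (if i \in s then A i j else (i == j)%:R).

(* Ergodic coefficient lambda(B) = 1 - min_{i<>j} sum_k min(b_ik, b_jk).
   Convention: an empty min (N = 1) is taken to be 1, so lambda(B) = 0. *)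
Definition ergodic_coef (R : realType) (N : nat) (B : 'M[R]_N) : R :=
  1 - \big[Num.min/1]_(p : 'I_N * 'I_N | p.1 != p.2)
        \sum_(k < N) Num.min (B p.1 k) (B p.2 k).

Fixpoint prod_A (R : realType) (N : nat) (A : 'M[R]_N) (T : Type)
    (sigma : nat -> T -> {set 'I_N}) (k : nat) (w : T) : 'M[R]_N :=
  match k with
  | 0 => 1%:M
  | k'.+1 => A_sub A (sigma k w) *m prod_A A sigma k' w
  end.

(* State x(k) for k >= 1: x(1) = x1, x(k+1) = A_{sigma_k} x(k). *)
Definition state (R : realType) (N : nat) (A : 'M[R]_N) (T : Type)
    (sigma : nat -> T -> {set 'I_N}) (x1 : 'cV[R]_N) (k : nat) (w : T) : 'cV[R]_N :=
  prod_A A sigma k.-1 w *m x1.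

Definition disagreement (R : realType) (N : nat) (x : 'cV[R]_N) : R :=
  \sum_(j < N) (x j 0 - (N%:R)^-1 * \sum_(i < N) x i 0) ^+ 2.

(* Consensus "almost surely" as defined in the paper (convergence in probability
   of the disagreement to 0, for every initial state). *)
Definition reaches_consensus_as (R : realType) (N : nat) (A : 'M[R]_N)
    (d : measure_display) (T : measurableType d) (P : probability T R)
    (sigma : nat -> T -> {set 'I_N}) : Prop :=
  forall (eps : R), 0 < eps -> forall x1 : 'cV[R]_N,
    (fun k => P [set w | eps <= disagreement (state A sigma x1 k w)]) @ \oo
      --> 0%E.

From HB Require Import structures.
From mathcomp Require Import all_boot all_order all_algebra.
From mathcomp Require Import all_classical all_reals all_analysis.
From mathcomp Require Import lra.
Import Order.TTheory GRing.Theory Num.Theory.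
Set Implicit Arguments. Unset Strict Implicit. Unset Printing Implicit Defensive.
Local Open Scope classical_set_scope.
Local Open Scope ring_scope.

(* For a row-stochastic B, the l1 distance between two rows of B is
   2 (1 - sum_k min(b_ik, b_jk)), so lambda(B) is half the largest such
   distance.  Hence the entries of B x spread by at most 2 lambda(B) |x|_1 and
   disagreement(B x) <= 4 N |x|_1^2 lambda(B): a small ergodic coefficient of
   the product forces consensus.  Conversely, run the iteration from the N unit
   vectors e_m: B e_m is the m-th column of B, and if every column lies within
   eta of its mean then any two rows are within 2 N eta in l1, i.e.
   lambda(B) <= N eta.  A union bound over m transfers convergence in
   probability from the N disagreements to lambda. *)

Lemma ler_sum_term (R : numDomainType) (I : finType) (F : I -> R) i :
  (forall j, 0 <= F j) -> F i <= \sum_j F j.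
Proof. by move=> F0; rewrite (bigD1 i) //= lerDl sumr_ge0. Qed.

Section RowStochastic.
Variables (R : realType) (N : nat).
Implicit Types (A B : 'M[R]_N) (x : 'cV[R]_N).

Lemma row_stochastic1 : row_stochastic (1%:M : 'M[R]_N).
Proof.
split=> [i j|i]; first by rewrite mxE ler0n.
under eq_bigr do rewrite mxE.
by rewrite (bigD1 i) //= eqxx big1 ?addr0 // => j; rewrite eq_sym => /negbTE ->.
Qed.

Lemma row_stochastic_mul A B :
  row_stochastic A -> row_stochastic B -> row_stochastic (A *m B).
Proof.
move=> [A0 A1] [B0 B1]; split=> [i j|i].
  by rewrite mxE; apply: sumr_ge0 => k _; apply: mulr_ge0.
under eq_bigr do rewrite mxE.
by rewrite exchange_big /=; under eq_bigr do rewrite -mulr_sumr B1 mulr1.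
Qed.

Lemma row_stochastic_A_sub A S : row_stochastic A -> row_stochastic (A_sub A S).
Proof.
have [_ I1] := row_stochastic1.
move=> [A0 A1]; split=> [i j|i]; rewrite /A_sub.
  by rewrite mxE; case: ifP.
have [iS|/negbTE iS] := boolP (i \in S); under eq_bigr do rewrite mxE iS /=.
  exact: A1.
by rewrite -[RHS](I1 i); apply: eq_bigr => j _; rewrite mxE.
Qed.

Lemma row_stochastic_prod_A A (T : Type) (sigma : nat -> T -> {set 'I_N}) k w :
  row_stochastic A -> row_stochastic (prod_A A sigma k w).
Proof.
move=> sA; elim: k => [|k IH] /=; first exact: row_stochastic1.
exact/row_stochastic_mul/IH/row_stochastic_A_sub.
Qed.

Lemma row_stochastic_sum_dist B i j : row_stochastic B ->
  \sum_k `|B i k - B j k| = 2 * (1 - \sum_k Num.min (B i k) (B j k)).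
Proof.
have dist_min (a b : R) : `|a - b| = a + b - 2 * Num.min a b.
  by case: (lerP a b) => ?; lra.
move=> [_ B1]; under eq_bigr do rewrite dist_min.
by rewrite !big_split /= !B1 sumrN -mulr_sumr; lra.
Qed.

Lemma ergodic_coef_ge0 B : 0 <= ergodic_coef B.
Proof. by rewrite subr_ge0; apply: bigmin_le_id. Qed.

Lemma ergodic_coef_le1 B : row_stochastic B -> ergodic_coef B <= 1.
Proof.
move=> [B0 _]; rewrite lerBlDr lerDl.
apply: le_bigmin => // -[i j] _ /=; apply: sumr_ge0 => k _.
by rewrite le_min !B0.
Qed.

Lemma row_dist_le_ergodic_coef B i j : row_stochastic B ->
  \sum_k `|B i k - B j k| <= 2 * ergodic_coef B.
Proof.
move=> sB; have [<-|ij] := eqVneq i j.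
  by rewrite big1 => [|k _]; rewrite ?subrr ?normr0 ?mulr_ge0 ?ergodic_coef_ge0.
rewrite row_stochastic_sum_dist // ler_pM2l // lerD2l lerN2.
exact: (@bigmin_le_cond _ _ _ _ (i, j) (fun p : 'I_N * 'I_N => p.1 != p.2)
  (fun p => \sum_k Num.min (B p.1 k) (B p.2 k))).
Qed.

Lemma ergodic_coef_le_row_dist B X : row_stochastic B -> 0 <= X ->
  (forall i j, i != j -> \sum_k `|B i k - B j k| <= 2 * X) ->
  ergodic_coef B <= X.
Proof.
move=> sB X0 dist_le; rewrite lerBlDr -lerBlDl.
apply: le_bigmin => [|[i j] /= ij]; first lra.
by have := dist_le _ _ ij; rewrite row_stochastic_sum_dist //; lra.
Qed.

Definition mean x := N%:R^-1 * \sum_i x i 0.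

Lemma sqr_dev_mean_le_disagreement x j : (x j 0 - mean x) ^+ 2 <= disagreement x.
Proof. by rewrite /disagreement; apply: ler_sum_term => k; apply: sqr_ge0. Qed.

Lemma disagreement_le x (D : R) :
  (forall j, `|x j 0 - mean x| <= D) -> disagreement x <= N%:R * D ^+ 2.
Proof.
move=> dev_le; rewrite mulr_natl -[X in _ *+ X]card_ord -sumr_const.
apply: ler_sum => j _; rewrite -real_normK ?num_real //.
by apply: lerXn2r; rewrite ?nnegrE ?(le_trans _ (dev_le j)).
Qed.

Lemma dev_mean_le x (D : R) : (0 < N)%N ->
  (forall i j, `|x i 0 - x j 0| <= D) -> forall j, `|x j 0 - mean x| <= D.
Proof.
move=> N_gt0 dist_le j; have N0 : N%:R != 0 :> R by rewrite pnatr_eq0 -lt0n.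
have -> : x j 0 - mean x = N%:R^-1 * \sum_i (x j 0 - x i 0).
  by rewrite sumrB sumr_const card_ord mulrBr -[x j 0 *+ N]mulr_natl mulKf.
rewrite normrM ger0_norm ?invr_ge0 ?ler0n // ler_pdivrMl ?ltr0n //.
apply: le_trans (ler_norm_sum _ _ _) _.
by rewrite mulr_natl -[X in _ *+ X]card_ord -sumr_const; apply: ler_sum.
Qed.

Lemma mulmx_dist_le B x i j : row_stochastic B ->
  `|(B *m x) i 0 - (B *m x) j 0| <= 2 * ergodic_coef B * \sum_k `|x k 0|.
Proof.
move=> sB; rewrite !mxE -sumrB; apply: le_trans (ler_norm_sum _ _ _) _.
under eq_bigr do rewrite -mulrBl normrM.
apply: (@le_trans _ _ (\sum_k (\sum_l `|B i l - B j l|) * `|x k 0|)).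
  apply: ler_sum => k _; apply: ler_wpM2r => //.
  by apply: ler_sum_term.
rewrite -mulr_sumr ler_wpM2r ?sumr_ge0 //.
exact: row_dist_le_ergodic_coef.
Qed.

Lemma disagreement_mulmx_le B x : (0 < N)%N -> row_stochastic B ->
  disagreement (B *m x) <= 4 * N%:R * (\sum_k `|x k 0|) ^+ 2 * ergodic_coef B.
Proof.
move=> N_gt0 sB; set M := \sum_k _; set l := ergodic_coef B.
have M0 : 0 <= M by apply: sumr_ge0.
have l0 : 0 <= l := ergodic_coef_ge0 B.
have l1 : l <= 1 := ergodic_coef_le1 sB.
have spread_le i j := mulmx_dist_le x i j sB.
apply: le_trans (disagreement_le (dev_mean_le N_gt0 spread_le)) _.
rewrite -/M -/l !exprMn.
have NM0 : 0 <= N%:R * M ^+ 2 by rewrite mulr_ge0 ?sqr_ge0.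
have : 0 <= l * (1 - l) by nra.
nra.
Qed.

Lemma ergodic_coef_le_disagreement_col B (eta : R) :
  row_stochastic B -> 0 <= eta ->
  (forall m, disagreement (col m B) < eta ^+ 2) -> ergodic_coef B <= N%:R * eta.
Proof.
move=> sB eta0 dis_lt; apply: ergodic_coef_le_row_dist; rewrite ?mulr_ge0 //.
have dev_lt m i : `|B i m - mean (col m B)| < eta.
  rewrite -ltr_sqr ?nnegrE // real_normK ?num_real //.
  apply: le_lt_trans (dis_lt m).
  by have := sqr_dev_mean_le_disagreement (col m B) i; rewrite mxE.
move=> i j _; apply: (@le_trans _ _ (\sum_(k < N) 2 * eta)); last first.
  by rewrite sumr_const card_ord -[(2 * eta) *+ N]mulr_natl mulrCA.
apply: ler_sum => k _; have := dev_lt k i; have := dev_lt k j.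
set c := mean _ => ltj lti.
rewrite (_ : B i k - B j k = (B i k - c) - (B j k - c)); last by lra.
by apply: le_trans (ler_normB _ _) _; lra.
Qed.

End RowStochastic.

Section Measurability.
Variables (R : realType) (N : nat) (A : 'M[R]_N).
Variables (d : measure_display) (T : measurableType d).
Variable sigma : nat -> T -> {set 'I_N}.
Hypothesis measurable_sigma : forall k S, measurable (sigma k @^-1` [set S]).

Lemma measurable_prod_A (f : 'M[R]_N -> Prop) k :
  measurable [set w | f (prod_A A sigma k w)].
Proof.
(* prod_A k.+1 depends on w only through sigma k.+1 w, which takes finitely many
   values, and prod_A k w. *)
elim: k f => [|k IH] f /=.
  have [f1|nf1] := pselect (f 1%:M).
    by rewrite (_ : [set _ | _] = setT) //; apply/seteqP; split.
  by rewrite (_ : [set _ | _] = set0) //; apply/seteqP; split.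
rewrite (_ : [set w | _] = \bigcup_(S in [set: {set 'I_N}])
  (sigma k.+1 @^-1` [set S] `&` [set w | f (A_sub A S *m prod_A A sigma k w)])).
  apply: fin_bigcup_measurable => [|S _]; first exact: finite_finset.
  apply: measurableI; first exact: measurable_sigma.
  exact: (IH (fun B => f (A_sub A S *m B))).
by apply/seteqP; split=> [w fw|w [S _ [/= <-]]] //; exists (sigma k.+1 w).
Qed.

End Measurability.

Lemma content_sub_sum d (R : realFieldType) (T : semiRingOfSetsType d)
    (mu : {content set T -> \bar R}) (I : finType) (X : set T) (F : I -> set T) :
  measurable X -> (forall i, measurable (F i)) -> X `<=` \bigcup_i F i ->
  (mu X <= \sum_i mu (F i))%E.
Proof.
move=> mX mF XF.
have := content_sub_fsum mu (D := [set: I]) finite_finset (fun i _ => mF i) mX XF.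
rewrite (fsbigE (index_enum I)) ?index_enum_uniq // => [|i _].
  by under eq_bigl do rewrite in_setT.
by rewrite mem_index_enum.
Qed.

Lemma squeeze_cvge0 (R : realFieldType) (I : Type) (F : set_system I)
    {FF : Filter F} (u v : I -> \bar R) :
  (forall i, (0 <= u i <= v i)%E) -> v @ F --> 0%E -> u @ F --> 0%E.
Proof. by move=> uv; apply: squeeze_cvge (cvg_cst _); apply: nearW. Qed.

Section Consensus.
Variables (R : realType) (N : nat) (A : 'M[R]_N).
Variables (d : measure_display) (T : measurableType d) (P : probability T R).
Variable sigma : nat -> T -> {set 'I_N}.
Hypothesis measurable_sigma : forall k S, measurable (sigma k @^-1` [set S]).
Hypothesis stochastic_A : row_stochastic A.

Definition ergodic_coef_cvg_in_prob : Prop := forall eps : R, 0 < eps ->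
  (fun k => P [set w | eps <= ergodic_coef (prod_A A sigma k w)]) @ \oo --> 0%E.

Let measurable_prod := measurable_prod_A A measurable_sigma.

Lemma consensus_of_ergodic_coef_cvg :
  (0 < N)%N -> ergodic_coef_cvg_in_prob -> reaches_consensus_as A P sigma.
Proof.
move=> N_gt0 erg eps eps0 x1; rewrite -cvg_shiftS /state /=.
set M := \sum_k `|x1 k 0|; set C := 4 * N%:R * M ^+ 2.
have C0 : 0 <= C by rewrite mulr_ge0 ?sqr_ge0.
apply: squeeze_cvge0 (erg _ (divr_gt0 eps0 (ltr_wpDl C0 ltr01))) => k.
rewrite measure_ge0 /=; apply: le_measure => [||w /= eps_le]; rewrite ?inE.
- exact: (measurable_prod (fun B => eps <= disagreement (B *m x1))).
- exact: (measurable_prod (fun B => _ <= ergodic_coef B)).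
have sPk := row_stochastic_prod_A sigma k w stochastic_A.
have := disagreement_mulmx_le x1 N_gt0 sPk.
have := ergodic_coef_ge0 (prod_A A sigma k w).
rewrite -/M -/C ler_pdivrMr ?(ltr_wpDl C0 ltr01) //; nra.
Qed.

Lemma ergodic_coef_cvg_of_consensus :
  reaches_consensus_as A P sigma -> ergodic_coef_cvg_in_prob.
Proof.
move=> cons eps eps0; set eta := eps / (N%:R + 1).
have eta0 : 0 < eta by rewrite divr_gt0 // ltr_wpDl.
have N_eta_lt : N%:R * eta < eps.
  by rewrite mulrA ltr_pdivrMr ?ltr_wpDl // mulrDr mulr1 mulrC ltrDl.
pose B k m :=
  [set w | eta ^+ 2 <= disagreement (prod_A A sigma k w *m delta_mx m 0)].
have B_cvg m : (fun k => P (B k m)) @ \oo --> 0%E.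
  by have := cons _ (exprn_gt0 2 eta0) (delta_mx m 0); rewrite -cvg_shiftS.
apply: (squeeze_cvge0 (v := fun k => \sum_m P (B k m))) => [k|].
  rewrite measure_ge0 content_sub_sum => [//||m|w /= eps_le].
  - exact: (measurable_prod (fun B => eps <= ergodic_coef B)).
  - exact: (measurable_prod (fun B => _ <= disagreement (B *m _))).
  apply: contrapT => no_m; move: eps_le; apply/negP; rewrite -ltNge.
  apply: le_lt_trans N_eta_lt; apply: ergodic_coef_le_disagreement_col.
  - exact: row_stochastic_prod_A.
  - exact: ltW.
  - by move=> m; rewrite colE ltNge; apply/negP => Bm; apply: no_m; exists m.
have := cvg_nnesum (F := \oo) (r := index_enum 'I_N)
  (f := fun m k => P (B k m)) (l := fun=> 0%E) (P := predT).
rewrite big1 //; apply=> m _; last exact: B_cvg.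
by apply: nearW => k; apply: measure_ge0.
Qed.

End Consensus.

Unset Implicit Arguments.
Set Strict Implicit.

Theorem lemma2 (R : realType) (N : nat) (A : 'M[R]_N)
    (d : measure_display) (T : measurableType d) (P : probability T R)
    (sigma : nat -> T -> {set 'I_N}) :
  (0 < N)%N ->
  row_stochastic A ->
  (forall k (S : {set 'I_N}), measurable (sigma k @^-1` [set S])) ->
  reaches_consensus_as A P sigma <->
  (forall eps : R, 0 < eps ->
     (fun k => P [set w | eps <= ergodic_coef (prod_A A sigma k w)]) @ \oo
       --> 0%E).
Proof.
move=> N_gt0 stochastic_A measurable_sigma; split.
- exact: ergodic_coef_cvg_of_consensus.
- exact: consensus_of_ergodic_coef_cvg.
Qed.
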